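(* Let $\mathbf P=(P,\leq,{}',0,1)$ be an orthogonal orthocomplemented lub-complete poset. Then the following conditions are equivalent: (i) $\mathbf P$ is a Boolean algebra. (ii) There exists a binary operator $\odot_C$ such that $x\odot_C y\leq_1 z$ if and only if $x\leq_2 y\rightarrow_C z$ for all $x,y,z\in P$.
   Context: $(P,\leq,{}',0,1)$ is a bounded poset with an antitone involution ${}'$; orthogonal means $x\leq y'$ implies $x\vee y$ exists; orthocomplemented means $x\vee x'=1$ for all $x$; lub-complete means for every lower bound $x$ of a finite subset $M$ there is a maximal lower bound of $M$ above $x$. For $A\subseteq P$, $U(A)$ is the set of upper bounds, $U(x,y)=U(\{x,y\})$, $\mathrm{Min}\,A$ is the set of minimal elements of $A$. The classical implication is $x\rightarrow_C y:=\mathrm{Min}\,U(x',y)\subseteq P$. The operator $\odot_C$ is a map $P^2\to 2^P$ (elements identified with singletons). For $A,B\subseteq P$: $A\leq_1 B$ means for every $x\in A$ there is $y\in B$ with $x\leq y$; $A\leq_2 B$ means for every $y\in B$ there is $x\in A$ with $x\leq y$. *)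

From Stdlib Require Import List.
Set Implicit Arguments.

Section Defs.
Variable T : Type.
Variable le : T -> T -> Prop.
Variable c : T -> T.
Variable zero one : T.

Record bounded_poset_inv : Prop := {
  le_refl : forall x, le x x;
  le_antisym : forall x y, le x y -> le y x -> x = y;
  le_trans : forall x y z, le x y -> le y z -> le x z;
  le_zero : forall x, le zero x;
  le_one : forall x, le x one;
  c_invol : forall x, c (c x) = x;
  c_antitone : forall x y, le x y -> le (c y) (c x)
}.

Definition is_join (x y j : T) : Prop :=
  le x j /\ le y j /\ forall u, le x u -> le y u -> le j u.
Definition is_meet (x y m : T) : Prop :=
  le m x /\ le m y /\ forall u, le u x -> le u y -> le u m.

Definition orthogonal : Prop :=
  forall x y, le x (c y) -> exists j, is_join x y j.

Definition orthocomplemented : Prop :=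
  forall x, is_join x (c x) one.

Definition lower_bound (M : list T) (x : T) : Prop :=
  forall m, In m M -> le x m.

Definition lub_complete : Prop :=
  forall (M : list T) (x : T), lower_bound M x ->
    exists w, lower_bound M w /\ le x w /\
      (forall v, lower_bound M v -> le w v -> v = w).

Definition boolean_algebra : Prop :=
  (forall x y, exists j, is_join x y j) /\
  (forall x y, exists m, is_meet x y m) /\
  (forall x y z a b m1 m2 r,
      is_join y z a -> is_meet x a b ->
      is_meet x y m1 -> is_meet x z m2 -> is_join m1 m2 r -> b = r) /\
  (forall x, is_join x (c x) one /\ is_meet x (c x) zero).

Definition U (A : T -> Prop) : T -> Prop := fun u => forall a, A a -> le a u.
Definition U2 (x y : T) : T -> Prop := fun u => le x u /\ le y u.
Definition Min (A : T -> Prop) : T -> Prop :=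
  fun x => A x /\ forall y, A y -> le y x -> y = x.

(* classical implication x ->_C y := Min U(x', y) *)
Definition implC (x y : T) : T -> Prop := Min (U2 (c x) y).

Definition le1 (A B : T -> Prop) : Prop :=
  forall x, A x -> exists y, B y /\ le x y.
Definition le2 (A B : T -> Prop) : Prop :=
  forall y, B y -> exists x, A x /\ le x y.

Definition singleton (x : T) : T -> Prop := fun w => w = x.
End Defs.

(* (i) => (ii): put x ⊙ y := x ∧ y.  In a Boolean algebra x ∧ y <= z iff x <= y' ∨ z,
   and y' ∨ z is the only element of y ->_C z.

   (ii) => (i): the adjunction yields a weak distributive law: if w <= z and
   w <= u ∨ z', then w <= u.  Indeed every element of w ⊙ u' lies below z (as
   w <= u' ->_C z) and below z' (as u' ->_C z' = {u ∨ z'}), hence is 0, so w lies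
   below u' ->_C 0 = {u}.  This law gives orthomodularity, then that every maximal
   lower bound of x and y (which exists by lub-completeness) is their meet; joins
   follow by de Morgan, and the law once more gives x = (x ∧ y) ∨ (x ∧ y'), from
   which distributivity follows. *)

From Stdlib Require Import List.

Set Implicit Arguments.

Section OrthoPoset.
Variables (T : Type) (le : T -> T -> Prop) (c : T -> T) (zero one : T).
Hypothesis HP : bounded_poset_inv le c zero one.

Lemma le_compl_swap x y : le x (c y) -> le y (c x).
Proof. intros H; rewrite <- (c_invol HP y); exact (c_antitone HP _ _ H). Qed.

Lemma le_compl_swapl x y : le (c x) y -> le (c y) x.
Proof. intros H; rewrite <- (c_invol HP x); exact (c_antitone HP _ _ H). Qed.

Lemma compl_one : c one = zero.
Proof.
  apply (le_antisym HP); [|apply (le_zero HP)].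
  apply le_compl_swapl, (le_one HP).
Qed.

Lemma compl_eq_zero x : c x = zero -> x = one.
Proof. intros H; rewrite <- (c_invol HP x), H, <- compl_one; apply (c_invol HP). Qed.

Lemma is_join_sym x y j : is_join le x y j -> is_join le y x j.
Proof. intros (? & ? & H); repeat split; auto. Qed.

Lemma is_meet_compl x y m : is_meet le x y m -> is_join le (c x) (c y) (c m).
Proof.
  intros (mx & my & H); repeat split; try apply (c_antitone HP); auto.
  intros u xu yu; apply le_compl_swapl, H; apply le_compl_swapl; assumption.
Qed.

Lemma is_meet_unique x y m m' : is_meet le x y m -> is_meet le x y m' -> m = m'.
Proof.
  intros (mx & my & H) (mx' & my' & H'); apply (le_antisym HP); auto.
Qed.

Lemma Min_U2_join x y j v : is_join le x y j -> Min le (U2 le x y) v -> v = j.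
Proof. intros (xj & yj & H) [[xv yv] Hmin]; symmetry; apply Hmin; [split|]; auto. Qed.

Lemma is_join_Min_U2 x y j : is_join le x y j -> Min le (U2 le x y) j.
Proof.
  intros (xj & yj & H); split; [split; assumption|].
  intros v [xv yv] vj; apply (le_antisym HP); auto.
Qed.

Lemma is_join_one x y :
  (forall t, le t (c x) -> le t (c y) -> t = zero) -> is_join le x y one.
Proof.
  intros H; split; [apply (le_one HP)|split; [apply (le_one HP)|]].
  intros u xu yu; rewrite (compl_eq_zero (H _ (c_antitone HP _ _ xu) (c_antitone HP _ _ yu))).
  apply (le_refl HP).
Qed.

Lemma le1_singleton (A : T -> Prop) z :
  le1 le A (singleton z) <-> (forall a, A a -> le a z).
Proof.
  split; intros H a Ha.
  - destruct (H a Ha) as (? & -> & az); exact az.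
  - exists z; split; [reflexivity | auto].
Qed.

Lemma le2_singleton x (B : T -> Prop) :
  le2 le (singleton x) B <-> (forall b, B b -> le x b).
Proof.
  split; intros H b Hb.
  - destruct (H b Hb) as (? & -> & xb); exact xb.
  - exists x; split; [reflexivity | auto].
Qed.

Section Boolean.
Hypothesis HB : boolean_algebra le c zero one.

Lemma meet_le_iff_le_join_compl x y z m j :
  is_meet le x y m -> is_join le (c y) z j -> (le m z <-> le x j).
Proof.
  destruct HB as (Hjoin & Hmeet & Hdistr & Hcompl).
  intros Hm Hj; destruct (Hcompl y) as [Hy1 Hy0]; split.
  - (* x = x ∧ (y ∨ y') = (x ∧ y) ∨ (x ∧ y') *)
    intros mz.
    destruct (Hmeet x (c y)) as [m' Hm']; destruct (Hjoin m m') as [r Hr].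
    assert (Hx1 : is_meet le x one x).
    { repeat split; [apply (le_refl HP) | apply (le_one HP) | auto]. }
    rewrite (Hdistr x y (c y) one x m m' r Hy1 Hx1 Hm Hm' Hr).
    apply Hr.
    + apply (le_trans HP) with z; [exact mz | apply Hj].
    + apply (le_trans HP) with (c y); [apply Hm' | apply Hj].
  - (* y ∧ (y' ∨ z) = (y ∧ y') ∨ (y ∧ z) = 0 ∨ (y ∧ z) *)
    intros xj.
    destruct (Hmeet y j) as [b Hb]; destruct (Hmeet y z) as [m' Hm'].
    destruct (Hjoin zero m') as [r Hr].
    rewrite (Hdistr y (c y) z j b zero m' r Hj Hb Hy0 Hm' Hr) in Hb.
    apply (le_trans HP) with r.
    + apply Hb; [apply Hm | apply (le_trans HP) with x; [apply Hm | exact xj]].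
    + apply Hr; [apply (le_zero HP) | apply Hm'].
Qed.

Lemma residuated_of_boolean : exists odot : T -> T -> (T -> Prop),
  forall x y z,
    le1 le (odot x y) (singleton z) <-> le2 le (singleton x) (implC le c y z).
Proof.
  exists (is_meet le); intros x y z.
  destruct HB as (Hjoin & Hmeet & _).
  destruct (Hmeet x y) as [m Hm]; destruct (Hjoin (c y) z) as [j Hj].
  assert (le1E : le1 le (is_meet le x y) (singleton z) <-> le m z).
  { rewrite le1_singleton; split; [auto|].
    intros mz m' Hm'; rewrite (is_meet_unique Hm' Hm); exact mz. }
  assert (le2E : le2 le (singleton x) (implC le c y z) <-> le x j).
  { rewrite le2_singleton; split; [intros H; apply H, is_join_Min_U2, Hj|].
    intros xj v Hv; rewrite (Min_U2_join Hj Hv); exact xj. }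
  rewrite le1E, le2E; exact (meet_le_iff_le_join_compl Hm Hj).
Qed.

End Boolean.

Section Orthocomplemented.
Hypothesis Hoc : orthocomplemented le c one.

Lemma le_compl_eq_zero w z : le w z -> le w (c z) -> w = zero.
Proof.
  intros wz wcz; rewrite <- (c_invol HP w), <- compl_one; f_equal.
  apply (le_antisym HP); [apply (le_one HP)|].
  apply (Hoc z); [apply le_compl_swap | apply (c_antitone HP)]; assumption.
Qed.

Lemma is_meet_compl_zero x : is_meet le x (c x) zero.
Proof.
  repeat split; try apply (le_zero HP).
  intros u ux ucx; rewrite (le_compl_eq_zero ux ucx); apply (le_refl HP).
Qed.

Section Residuated.
Hypothesis Horth : orthogonal le c.
Variable odot : T -> T -> (T -> Prop).
Hypothesis Hres : forall x y z,
  le1 le (odot x y) (singleton z) <-> le2 le (singleton x) (implC le c y z).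

Lemma residuation x y z :
  (forall a, odot x y a -> le a z) <-> (forall v, implC le c y z v -> le x v).
Proof. rewrite <- le1_singleton, <- le2_singleton; apply Hres. Qed.

Lemma le_of_le_join_compl w z u j :
  le w z -> is_join le u (c z) j -> le w j -> le w u.
Proof.
  intros wz Hj wj.
  assert (below_z : forall a, odot w (c u) a -> le a z).
  { apply residuation; intros v [[_ zv] _]; apply (le_trans HP) with z; assumption. }
  assert (below_cz : forall a, odot w (c u) a -> le a (c z)).
  { apply residuation; intros v Hv; unfold implC in Hv; rewrite (c_invol HP) in Hv.
    rewrite (Min_U2_join Hj Hv); exact wj. }
  assert (below_zero : forall a, odot w (c u) a -> le a zero).
  { intros a Ha; rewrite (le_compl_eq_zero (below_z a Ha) (below_cz a Ha)).
    apply (le_refl HP). }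
  apply (proj1 (residuation _ _ _) below_zero); unfold implC; rewrite (c_invol HP).
  apply is_join_Min_U2; repeat split; [apply (le_refl HP) | apply (le_zero HP) | auto].
Qed.

(* d is the relative complement x ∧ m' = (x' ∨ m)'. *)
Lemma orthomodular_split m x : le m x ->
  exists d s, le d x /\ le d (c m) /\ is_join le m d s /\ le x s.
Proof.
  intros mx.
  destruct (@Horth (c x) m) as [j (cxj & mj & Hjmin)]; [exact (c_antitone HP _ _ mx)|].
  assert (cjx : le (c j) x) by (apply le_compl_swapl, cxj).
  destruct (@Horth m (c j)) as [s Hs]; [rewrite (c_invol HP); exact mj|].
  exists (c j), s; split; [exact cjx|split; [exact (c_antitone HP _ _ mj)|split; [exact Hs|]]].
  assert (sx : le s x) by (apply Hs; [exact mx | exact cjx]).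
  destruct (@Horth s (c x)) as [k Hk]; [rewrite (c_invol HP); exact sx|].
  apply (le_of_le_join_compl (le_refl HP x) Hk).
  assert (jk : le j k).
  { apply Hjmin; [apply Hk | apply (le_trans HP) with s; [apply Hs | apply Hk]]. }
  assert (cjk : le (c j) k) by (apply (le_trans HP) with s; [apply Hs | apply Hk]).
  apply (le_trans HP) with one; [apply (le_one HP) | exact (proj2 (proj2 (Hoc j)) k jk cjk)].
Qed.

Lemma is_meet_of_max_lower_bound x y m :
  le m x -> le m y -> (forall v, le v x -> le v y -> le m v -> v = m) ->
  is_meet le x y m.
Proof.
  intros mx my Hmax; repeat split; auto; intros w wx wy.
  destruct (orthomodular_split mx) as (d & s & dx & dcm & Hs & xs).
  assert (disjoint_d_y : forall v, le v d -> le v y -> v = zero).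
  { intros v vd vy.
    destruct (@Horth v m) as [t Ht]; [apply (le_trans HP) with d; assumption|].
    assert (vx : le v x) by (apply (le_trans HP) with d; assumption).
    assert (tm : t = m) by (apply Hmax; [apply Ht..|apply Ht]; assumption).
    apply (le_compl_eq_zero (z := m)); [rewrite <- tm; apply Ht|].
    apply (le_trans HP) with d; assumption. }
  assert (wcd : le w (c d)).
  { apply (le_of_le_join_compl wy (j := one)); [|apply (le_one HP)].
    apply is_join_one; intros t tcd tcy; rewrite (c_invol HP) in tcd, tcy.
    apply disjoint_d_y; assumption. }
  apply (le_of_le_join_compl wcd (j := s)); [rewrite (c_invol HP); exact Hs|].
  apply (le_trans HP) with x; assumption.
Qed.

Hypothesis Hlub : lub_complete le.

Lemma meet_exists x y : exists m, is_meet le x y m.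
Proof.
  destruct (@Hlub (x :: y :: nil) zero) as (m & Hm & _ & Hmax).
  { intros t _; apply (le_zero HP). }
  exists m; apply is_meet_of_max_lower_bound; try (apply Hm; simpl; auto).
  intros v vx vy mv; apply Hmax; [|exact mv].
  intros t [<- | [<- | []]]; assumption.
Qed.

Lemma join_exists x y : exists j, is_join le x y j.
Proof.
  destruct (meet_exists (c x) (c y)) as [m Hm]; exists (c m).
  rewrite <- (c_invol HP x), <- (c_invol HP y); exact (is_meet_compl Hm).
Qed.

Lemma le_join_meet_meet_compl x y m1 m2 e :
  is_meet le x y m1 -> is_meet le x (c y) m2 -> is_join le m1 m2 e -> le x e.
Proof.
  intros Hm1 Hm2 He.
  assert (ex : le e x) by (apply He; [apply Hm1 | apply Hm2]).
  destruct (orthomodular_split ex) as (d & s & dx & dce & Hs & xs).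
  assert (dcm1 : le d (c m1)).
  { apply (le_trans HP) with (c e); [exact dce | apply (c_antitone HP), He]. }
  assert (dcm2 : le d (c m2)).
  { apply (le_trans HP) with (c e); [exact dce | apply (c_antitone HP), He]. }
  assert (dcy : le d (c y)).
  { apply (le_of_le_join_compl dx (j := c m1)); [|exact dcm1].
    apply is_join_sym, is_meet_compl, Hm1. }
  assert (dy : le d y).
  { apply (le_of_le_join_compl dx (j := c m2)); [|exact dcm2].
    rewrite <- (c_invol HP y) at 1; apply is_join_sym, is_meet_compl, Hm2. }
  apply (le_trans HP) with s; [exact xs|].
  apply Hs; [apply (le_refl HP)|].
  rewrite (le_compl_eq_zero dy dcy); apply (le_zero HP).
Qed.

Lemma meet_join_distr x y z a b m1 m2 r :
  is_join le y z a -> is_meet le x a b ->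
  is_meet le x y m1 -> is_meet le x z m2 -> is_join le m1 m2 r -> b = r.
Proof.
  intros Ha Hb Hm1 Hm2 Hr; apply (le_antisym HP).
  - destruct (meet_exists b y) as [n1 Hn1]; destruct (meet_exists b (c y)) as [n2 Hn2].
    destruct (join_exists n1 n2) as [e He].
    assert (n1x : le n1 x) by (apply (le_trans HP) with b; [apply Hn1 | apply Hb]).
    assert (n2x : le n2 x) by (apply (le_trans HP) with b; [apply Hn2 | apply Hb]).
    assert (n2z : le n2 z).
    { apply (le_of_le_join_compl (proj1 (proj2 Hn2)) (j := a)).
      - rewrite (c_invol HP); apply is_join_sym, Ha.
      - apply (le_trans HP) with b; [apply Hn2 | apply Hb]. }
    apply (le_trans HP) with e; [exact (le_join_meet_meet_compl Hn1 Hn2 He)|].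
    apply He.
    + apply (le_trans HP) with m1; [apply Hm1; [exact n1x | apply Hn1] | apply Hr].
    + apply (le_trans HP) with m2; [apply Hm2; assumption | apply Hr].
  - apply Hr; apply Hb.
    + apply Hm1.
    + apply (le_trans HP) with y; [apply Hm1 | apply Ha].
    + apply Hm2.
    + apply (le_trans HP) with z; [apply Hm2 | apply Ha].
Qed.

Lemma boolean_of_residuated : boolean_algebra le c zero one.
Proof.
  split; [exact join_exists|split; [exact meet_exists|split; [exact meet_join_distr|]]].
  intros x; split; [apply Hoc | apply is_meet_compl_zero].
Qed.

End Residuated.
End Orthocomplemented.
End OrthoPoset.

Unset Implicit Arguments.

Theorem proposition3 (T : Type) (le : T -> T -> Prop) (c : T -> T) (zero one : T)
  (HP : bounded_poset_inv le c zero one)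
  (Horth : orthogonal le c)
  (Hoc : orthocomplemented le c one)
  (Hlub : lub_complete le) :
  boolean_algebra le c zero one <->
  exists odot : T -> T -> (T -> Prop),
    forall x y z,
      le1 le (odot x y) (singleton z) <->
      le2 le (singleton x) (implC le c y z).
Proof.
  split.
  - intros HB; exact (residuated_of_boolean HP HB).
  - intros [odot Hres]; exact (boolean_of_residuated HP Hoc Horth odot Hres Hlub).
Qed.
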